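(* Let $\mathcal{H}$ be a Hilbert space, $h\in\mathcal{H}$, $\mathcal{L}$ a nonempty set of closed subspaces of $\mathcal{H}$, and define $\mathcal{C}: 2^{\mathcal{L}}\to 2^{\mathcal{L}}$ by $b\in\mathcal{C}(A)$ iff $A^*_p(h)\in b$. If $A,B\subseteq\mathcal{L}$ and $B\subseteq\mathcal{C}(A)$, then $A^*_p(h)=(A^*\cap B^* )_p(h)$ and $d(h,A^* )\ge d(h,B^* )$.
   Context: For $A\subseteq\mathcal{L}$, $A^*=\bigcap_{a\in A}a$ (with $A^*=\mathcal{H}$ if $A=\emptyset$); for a closed subspace $V$, $V_p$ denotes the orthogonal projection onto $V$ (so $V_p(h)$ is the point of $V$ closest to $h$), and $A^*_p=(A^* )_p$. $d(h,V)$ denotes the distance from $h$ to the closed subspace $V$. *)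

From HB Require Import structures.
From mathcomp Require Import all_boot all_order all_algebra.
From mathcomp Require Import all_classical all_reals all_analysis.
Set Implicit Arguments. Unset Strict Implicit. Unset Printing Implicit Defensive.
Import Order.TTheory GRing.Theory Num.Theory.
Import numFieldNormedType.Exports.
Local Open Scope classical_set_scope.
Local Open Scope ring_scope.

(* ip is a (real) inner product on H inducing the norm of H.  Together with
   completeness of H this makes H a real Hilbert space. *)
Definition inner_product_for {R : realType} {H : normedModType R}
  (ip : H -> H -> R) : Prop :=
  [/\ forall x y, ip x y = ip y x,
      forall a x y z, ip (a *: x + y) z = a * ip x z + ip y z
    & forall x, ip x x = `|x| ^+ 2].

Definition closed_subspace {R : realType} {H : normedModType R} (V : set H) : Prop :=
  [/\ V 0, (forall x y, V x -> V y -> V (x + y)),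
      (forall (a : R) x, V x -> V (a *: x)) & closed V].

Definition Astar {R : realType} {H : normedModType R} (A : set (set H)) : set H :=
  \bigcap_(a in A) a.

Definition is_closest {R : realType} {H : normedModType R} (V : set H) (h p : H) : Prop :=
  V p /\ forall v, V v -> `|h - p| <= `|h - v|.

Definition orth_proj {R : realType} {H : normedModType R} (V : set H) (h : H) : H :=
  xget 0 (is_closest V h).

Definition dist {R : realType} {H : normedModType R} (h : H) (V : set H) : R :=
  inf [set `|h - v| | v in V].

(* Since B is contained in C(A), the point p := A^*_p(h) lies in every member
   of B, hence in A^* ∩ B^*; being closest to h in the larger set A^*, it is
   also closest in A^* ∩ B^*.  Closest points in a closed subspace are unique by
   Apollonius' identity, so p is the projection of h onto A^* ∩ B^*, and the
   distance from h to B^* is at most |h - p|, the distance from h to A^*.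
   Completeness enters only because orth_proj is a choice with junk value 0:
   the same identity makes every minimizing sequence Cauchy, so closest points
   exist. *)

From HB Require Import structures.
From mathcomp Require Import all_boot all_order all_algebra.
From mathcomp Require Import all_classical all_reals all_analysis.
From mathcomp Require Import lra.
Set Implicit Arguments. Unset Strict Implicit. Unset Printing Implicit Defensive.
Import Order.TTheory GRing.Theory Num.Theory.
Import numFieldNormedType.Exports.
Local Open Scope classical_set_scope.
Local Open Scope ring_scope.

Section distance.
Variables (R : realType) (H : normedModType R) (V : set H) (h : H).

Lemma dist_le (v : H) : V v -> dist h V <= `|h - v|.
Proof. by move=> Vv; apply: ge_inf; [exists 0 => _ [w _ <-] | exists v]. Qed.

Lemma dist_ge0 : V !=set0 -> 0 <= dist h V.
Proof. by move=> [v Vv]; apply: lb_le_inf => [|_ [w _ <-]]; [exists `|h - v|, v|]. Qed.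

Lemma dist_approx (e : R) :
  V !=set0 -> 0 < e -> exists2 v, V v & `|h - v| < dist h V + e.
Proof.
move=> [v Vv] e0.
have : has_inf [set `|h - w| | w in V].
  by split; [exists `|h - v|, v | exists 0 => _ [w _ <-]].
by move=> /(inf_adherent e0) [_ [w Vw <-]]; exists w.
Qed.

Lemma is_closest_dist (p : H) : is_closest V h p -> `|h - p| = dist h V.
Proof.
move=> [Vp hp]; apply/eqP; rewrite eq_le dist_le // andbT.
by apply: lb_le_inf => [|_ [v Vv <-]]; [exists `|h - p|, p | exact: hp].
Qed.

Lemma dist_is_closest (p : H) :
  V p -> `|h - p| <= dist h V -> is_closest V h p.
Proof. by move=> Vp hp; split=> // v Vv; rewrite (le_trans hp) ?dist_le. Qed.

Lemma minimizing_seq_cvg_dist (v : nat -> H) :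
  (forall n, V (v n)) -> (forall n, `|h - v n| <= dist h V + harmonic n) ->
  `|h - v n| @[n --> \oo] --> dist h V.
Proof.
move=> Vv hv.
apply: (@squeeze_cvgr _ _ _ _ (fun=> dist h V) (fun n => dist h V + harmonic n)).
- by apply: nearW => n; rewrite dist_le // hv.
- exact: cvg_cst.
- by rewrite -[X in _ --> X]addr0; apply: cvgD; [exact: cvg_cst | exact: cvg_harmonic].
Qed.

Lemma is_closest_sub (U : set H) (p : H) :
  U `<=` V -> U p -> is_closest V h p -> is_closest U h p.
Proof. by move=> UV Up [_ hp]; split=> // v /UV; apply: hp. Qed.

End distance.

Lemma closed_subspace_mid (R : realType) (H : normedModType R) (V : set H) (x y : H) :
  closed_subspace V -> V x -> V y -> V (2^-1 *: (x + y)).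
Proof. by case=> _ VD VZ _ Vx Vy; apply/VZ/VD. Qed.

Lemma closed_subspace_Astar (R : realType) (H : normedModType R) (A : set (set H)) :
  (forall a, A a -> closed_subspace a) -> closed_subspace (Astar A).
Proof.
move=> hA; split.
- by move=> a /hA [].
- move=> x y Ax Ay a Aa; have [_ VD _ _] := hA a Aa.
  by apply: VD; [exact: Ax | exact: Ay].
- by move=> c x Ax a Aa; have [_ _ VZ _] := hA a Aa; apply: VZ; exact: Ax.
- by apply: closed_bigI => a /hA [].
Qed.

Section inner_product_space.
Variables (R : realType) (H : normedModType R) (ip : H -> H -> R).
Hypothesis hip : inner_product_for ip.

Lemma parallelogram (x y : H) :
  `|x + y| ^+ 2 + `|x - y| ^+ 2 = 2 * `|x| ^+ 2 + 2 * `|y| ^+ 2.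
Proof.
case: hip => ipC ipl ipxx.
have ipDl z u v : ip (u + v) z = ip u z + ip v z.
  by have := ipl 1 u v z; rewrite scale1r mul1r.
have ipNl z u : ip (- u) z = - ip u z.
  have ip0l : ip 0 z = 0 by have := ipDl z 0 0; rewrite addr0 => e; lra.
  by have := ipl (-1) u 0 z; rewrite ip0l !addr0 scaleN1r mulN1r.
have ipDr z u v : ip z (u + v) = ip z u + ip z v by rewrite ipC ipDl !(ipC z).
have ipNr z u : ip z (- u) = - ip z u by rewrite ipC ipNl ipC.
rewrite -!ipxx !ipDl !ipDr !ipNl !ipNr (ipC y x); lra.
Qed.

Lemma apollonius (x y h : H) :
  `|x - y| ^+ 2 = 2 * `|h - x| ^+ 2 + 2 * `|h - y| ^+ 2
                  - 4 * `|h - 2^-1 *: (x + y)| ^+ 2.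
Proof.
have := parallelogram (h - x) (h - y).
have -> : h - x - (h - y) = y - x by rewrite opprB addrC addrA addrNK.
have -> : h - x + (h - y) = 2 *: (h - 2^-1 *: (x + y)).
  rewrite scalerBr scalerA mulfV ?pnatr_eq0 // scale1r scaler_nat mulr2n.
  by rewrite opprD addrACA.
rewrite normrZ ger0_norm // exprMn (distrC y x) => e.
have -> : (4 : R) = 2 ^+ 2 by rewrite expr2; lra.
lra.
Qed.

Lemma near_minimizers_close (x y h : H) (d t : R) :
  0 <= d -> d <= `|h - 2^-1 *: (x + y)| ->
  `|h - x| <= d + t -> `|h - y| <= d + t ->
  `|x - y| ^+ 2 <= 4 * t * (2 * d + t).
Proof.
move=> d0 dmid hx hy; rewrite (apollonius x y h).
have sqr_le (a b : R) : 0 <= a -> a <= b -> a ^+ 2 <= b ^+ 2.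
  by move=> a0 ab; rewrite ler_pXn2r ?nnegrE //; apply: le_trans ab.
have := sqr_le _ _ (normr_ge0 _) hx; have := sqr_le _ _ (normr_ge0 _) hy.
have := sqr_le _ _ d0 dmid; lra.
Qed.

End inner_product_space.

Section closest_point.
Variables (R : realType) (H : normedModType R) (ip : H -> H -> R).
Hypothesis hip : inner_product_for ip.
Variables (V : set H) (h : H).
Hypothesis hV : closed_subspace V.

Lemma near_dist_close (x y : H) (t : R) :
  V x -> V y -> `|h - x| <= dist h V + t -> `|h - y| <= dist h V + t ->
  `|x - y| ^+ 2 <= 4 * t * (2 * dist h V + t).
Proof.
move=> Vx Vy; apply: (near_minimizers_close hip).
- by apply: dist_ge0; exists x.
- exact/dist_le/(closed_subspace_mid hV Vx Vy).
Qed.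

Lemma is_closest_unique (p q : H) :
  is_closest V h p -> is_closest V h q -> p = q.
Proof.
move=> cp cq; have [[Vp _] [Vq _]] := (cp, cq).
have := near_dist_close (t := 0) Vp Vq.
rewrite !addr0 (is_closest_dist cp) (is_closest_dist cq) mulr0 mul0r.
move=> /(_ (lexx _) (lexx _)) pq_le0; apply/eqP.
by rewrite -subr_eq0 -normr_eq0 -sqrf_eq0 eq_le pq_le0 sqr_ge0.
Qed.

Lemma minimizing_seq_cauchy (v : nat -> H) :
  (forall n, V (v n)) -> (forall n, `|h - v n| <= dist h V + harmonic n) ->
  cauchy (v @ \oo).
Proof.
move=> Vv hv; apply: cauchy_exP => e e0.
set c := 4 * (2 * dist h V + 1).
set N := Num.truncn (c / e ^+ 2); set t : R := harmonic N.
have t_gt0 : 0 < t := harmonic_gt0 N.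
have t_le1 : t <= 1 by rewrite /t /= invf_le1 // ler1n.
have tc_lt : t * c < e ^+ 2.
  rewrite mulrC ltr_pdivrMr // mulrC -ltr_pdivrMr ?exprn_gt0 //.
  exact: truncnS_gt.
exists (v N), N => // n /= Nn; rewrite -ball_normE /=.
have hvn : `|h - v n| <= dist h V + t.
  by rewrite (le_trans (hv n)) // lerD2l /= lef_pV2 ?posrE // ler_nat.
have : `|v N - v n| ^+ 2 < e ^+ 2.
  apply: le_lt_trans (near_dist_close (Vv N) (Vv n) (hv N) hvn) _.
  apply: le_lt_trans _ tc_lt; rewrite /c -/t.
  have : 0 <= t * (1 - t) by rewrite mulr_ge0 ?subr_ge0 // ltW.
  lra.
by rewrite ltr_pXn2r ?nnegrE ?normr_ge0 ?(ltW e0).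
Qed.

Lemma orth_proj_eq (p : H) : is_closest V h p -> orth_proj V h = p.
Proof.
by move=> cp; apply: xget_unique => // q cq; apply: is_closest_unique cq cp.
Qed.

End closest_point.

Section complete_space.
Variables (R : realType) (H : completeNormedModType R) (ip : H -> H -> R).
Hypothesis hip : inner_product_for ip.

Lemma exists_closest (V : set H) (h : H) :
  closed_subspace V -> exists p, is_closest V h p.
Proof.
move=> hV; have V_neq0 : V !=set0 by exists 0; case: hV.
have /choice [v hv] n : exists v, V v /\ `|h - v| <= dist h V + harmonic n.
  have [w Vw hw] := dist_approx h V_neq0 (harmonic_gt0 n).
  by exists w; split; last exact: ltW.
have Vv n : V (v n) := (hv n).1.
have hvd n : `|h - v n| <= dist h V + harmonic n := (hv n).2.
have vl : v @ \oo --> lim (v @ \oo).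
  exact: cauchy_cvg (minimizing_seq_cauchy hip hV Vv hvd).
exists (lim (v @ \oo)); apply: dist_is_closest.
- have Vcl : closed V by case: hV.
  have Vv_near : \forall n \near \oo, V (v n) by exact: nearW.
  exact: (closed_cvg V Vcl Vv_near _ vl).
- have h_vn : `|h - v n| @[n --> \oo] --> `|h - lim (v @ \oo)|.
    by apply: cvg_norm; apply: cvgB => //; exact: cvg_cst.
  by rewrite (norm_cvg_unique h_vn (minimizing_seq_cvg_dist Vv hvd)).
Qed.

Lemma is_closest_orth_proj (V : set H) (h : H) :
  closed_subspace V -> is_closest V h (orth_proj V h).
Proof. by move=> /(exists_closest h) ?; apply: xgetPex. Qed.

End complete_space.

Theorem lemma20 (R : realType) (H : completeNormedModType R)
  (ip : H -> H -> R) (hip : inner_product_for ip)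
  (h : H) (L : set (set H)) (hL : L !=set0)
  (hLcl : forall V, L V -> closed_subspace V)
  (C : set (set H) -> set (set H))
  (hC : forall A b, C A b <-> (L b /\ b (orth_proj (Astar A) h)))
  (A B : set (set H)) (hA : A `<=` L) (hB : B `<=` L) (hBA : B `<=` C A) :
  orth_proj (Astar A) h = orth_proj (Astar A `&` Astar B) h /\
  dist h (Astar B) <= dist h (Astar A).
Proof.
have sA : closed_subspace (Astar A) by apply: closed_subspace_Astar => a /hA /hLcl.
have sAB : closed_subspace (Astar A `&` Astar B).
  by rewrite /Astar -bigcap_setU; apply: closed_subspace_Astar => a [/hA|/hB] /hLcl.
have cA := is_closest_orth_proj hip h sA.
set p := orth_proj (Astar A) h in cA *.
have Bp : Astar B p by move=> b /hBA /hC [].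
have Ap : Astar A p by case: cA.
have cAB : is_closest (Astar A `&` Astar B) h p.
  exact: is_closest_sub (@subIsetl _ _ _) (conj Ap Bp) cA.
split; first by rewrite (orth_proj_eq hip sAB cAB).
by rewrite -(is_closest_dist cA) dist_le.
Qed.
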